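(* Let $1<p<\infty$ and let $T:\ell_p\to\ell_p$ be the bounded linear operator defined by $Te_1=e_1$ and $Te_n=(1-\frac1n)e_n$ for all $n\ge2$, where $\{e_n\}$ is the standard unit vector basis of (real) $\ell_p$. Then $\|T\|=1$, $M_T=\{\pm e_1\}$, and $T$ is not a smooth point of $\mathbb{B}(\ell_p)$.
   Context: $\mathbb{B}(\ell_p)$ has the operator norm; $M_T=\{x\in\ell_p:\|x\|=1,\ \|Tx\|=\|T\|\}$. A nonzero element $x$ of a normed space $\mathbb{Z}$ is smooth if there is a unique $f\in\mathbb{Z}^*$ with $\|f\|=1$ and $f(x)=\|x\|$. *)

From Stdlib Require Import Reals Lra Classical ClassicalEpsilon Arith.
Open Scope R_scope.

Definition Seq := nat -> R.
Definition Op := Seq -> Seq.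

(* a^q for a >= 0, with 0^q := 0 (q > 0 in all uses) *)
Definition rpow (a q : R) : R := if Rlt_dec 0 a then Rpower a q else 0.

(* the sum of a convergent series (meaningful when it converges) *)
Definition series_sum (u : nat -> R) : R :=
  epsilon (inhabits 0) (fun l => infinite_sum u l).

(* least upper bound of a set of reals (meaningful when it exists) *)
Definition sup (E : R -> Prop) : R :=
  epsilon (inhabits 0) (fun M => is_lub E M).

Definition in_lp (p : R) (x : Seq) : Prop :=
  exists l, infinite_sum (fun n => rpow (Rabs (x n)) p) l.

Definition lp_norm (p : R) (x : Seq) : R :=
  rpow (series_sum (fun n => rpow (Rabs (x n)) p)) (1 / p).

(* bounded linear operator on ℓ_p (only its action on ℓ_p matters) *)
Definition is_bounded_op (p : R) (A : Op) : Prop :=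
  (forall x, in_lp p x -> in_lp p (A x)) /\
  (forall x y a b, in_lp p x -> in_lp p y ->
     forall n, A (fun k => a * x k + b * y k) n = a * A x n + b * A y n) /\
  (exists C, forall x, in_lp p x -> lp_norm p (A x) <= C * lp_norm p x).

Definition op_norm (p : R) (A : Op) : R :=
  sup (fun r => exists x, in_lp p x /\ lp_norm p x = 1 /\ r = lp_norm p (A x)).

Definition M_set (p : R) (A : Op) (x : Seq) : Prop :=
  in_lp p x /\ lp_norm p x = 1 /\ lp_norm p (A x) = op_norm p A.

Definition op_lin (a : R) (A : Op) (b : R) (B : Op) : Op :=
  fun x n => a * A x n + b * B x n.

Definition is_bounded_functional (p : R) (f : Op -> R) : Prop :=
  (forall A B a b, is_bounded_op p A -> is_bounded_op p B ->
     f (op_lin a A b B) = a * f A + b * f B) /\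
  (exists C, forall A, is_bounded_op p A -> Rabs (f A) <= C * op_norm p A).

Definition dual_norm (p : R) (f : Op -> R) : R :=
  sup (fun r => exists A, is_bounded_op p A /\ op_norm p A <= 1 /\ r = Rabs (f A)).

Definition norming_functional (p : R) (A : Op) (f : Op -> R) : Prop :=
  is_bounded_functional p f /\ dual_norm p f = 1 /\ f A = op_norm p A.

(* A is smooth in B(ℓ_p): exactly one norming functional
   (functionals identified when they agree on B(ℓ_p)) *)
Definition smooth_point (p : R) (A : Op) : Prop :=
  exists f, norming_functional p A f /\
    forall g, norming_functional p A g ->
      forall B, is_bounded_op p B -> g B = f B.

(* e_1 is index 0; e_n is index n-1 *)
Definition e1 : Seq := fun n => if Nat.eqb n 0 then 1 else 0.

Definition T_op : Op :=
  fun x n => if Nat.eqb n 0 then x n else (1 - 1 / INR (S n)) * x n.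

(* T is a coordinatewise contraction fixing e1, so ||T|| = 1 with the norm
   attained at ±e1; if ||T x|| = ||x|| = 1 the nonnegative series
   sum_n (|x_n|^p - |(T x)_n|^p) vanishes, which kills every coordinate of x
   except the first.  Two different norming functionals of T are the
   diagonal entry A ↦ <A e1, e1> and an ultrafilter limit of the diagonal
   entries <A e_n, e_n>; both are bounded by ||A|| and equal 1 at T, because
   the diagonal of T tends to 1, but they disagree on the projection onto
   span{e1}. *)

From Stdlib Require Import Reals Lra Lia Classical ClassicalEpsilon FunctionalExtensionality.
From mathcomp Require filter.
Open Scope R_scope.

Lemma rpow_pos a q : 0 < a -> rpow a q = Rpower a q.
Proof. intros Ha; unfold rpow; destruct (Rlt_dec 0 a); [reflexivity | lra]. Qed.

Lemma rpow_0_l q : rpow 0 q = 0.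
Proof. unfold rpow; destruct (Rlt_dec 0 0); [lra | reflexivity]. Qed.

Lemma rpow_ge0 a q : 0 <= rpow a q.
Proof. unfold rpow; destruct (Rlt_dec 0 a); [left; apply exp_pos | lra]. Qed.

Lemma rpow_1_r a : 0 <= a -> rpow a 1 = a.
Proof.
  intros [Ha | <-]; [rewrite rpow_pos by exact Ha; apply Rpower_1, Ha | apply rpow_0_l].
Qed.

Lemma rpow_le a b q : 0 <= a -> a <= b -> 0 <= q -> rpow a q <= rpow b q.
Proof.
  intros [Ha | <-] Hab Hq.
  - rewrite !rpow_pos by lra. apply Rle_Rpower_l; lra.
  - rewrite rpow_0_l. apply rpow_ge0.
Qed.

Lemma rpow_rpow a q r : 0 <= a -> rpow (rpow a q) r = rpow a (q * r).
Proof.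
  intros [Ha | <-].
  - rewrite (rpow_pos a q), rpow_pos, rpow_pos by (exact Ha || apply exp_pos).
    apply Rpower_mult.
  - rewrite !rpow_0_l. reflexivity.
Qed.

Lemma rpow_rpow_inv a p : 0 < p -> 0 <= a -> rpow (rpow a p) (1 / p) = a.
Proof.
  intros Hp Ha. rewrite rpow_rpow by exact Ha.
  replace (p * (1 / p)) with 1 by (field; lra). apply rpow_1_r, Ha.
Qed.

Lemma rpow_inv_rpow a p : 0 < p -> 0 <= a -> rpow (rpow a (1 / p)) p = a.
Proof.
  intros Hp Ha. rewrite rpow_rpow by exact Ha.
  replace (1 / p * p) with 1 by (field; lra). apply rpow_1_r, Ha.
Qed.

Lemma series_sum_eq u l : infinite_sum u l -> series_sum u = l.
Proof.
  intros Hu. unfold series_sum.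
  apply (uniqueness_sum u); [| exact Hu].
  exact (epsilon_spec (inhabits 0) (infinite_sum u) (ex_intro _ l Hu)).
Qed.

Lemma infinite_sum_ge0 u l : (forall n, 0 <= u n) -> infinite_sum u l -> 0 <= l.
Proof.
  intros Hu Hl. apply Rle_trans with (sum_f_R0 u 0); [apply cond_pos_sum, Hu |].
  apply sum_incr; assumption.
Qed.

Lemma term_le_infinite_sum u l k :
  (forall n, 0 <= u n) -> infinite_sum u l -> u k <= l.
Proof.
  intros Hu Hl. apply Rle_trans with (sum_f_R0 u k); [| apply sum_incr; assumption].
  destruct k as [| k]; simpl; [lra |]. pose proof (cond_pos_sum u k Hu). lra.
Qed.

Lemma infinite_sum_eq0_terms u k :
  (forall n, 0 <= u n) -> infinite_sum u 0 -> u k = 0.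
Proof.
  intros Hu Hl. pose proof (term_le_infinite_sum u 0 k Hu Hl). pose proof (Hu k). lra.
Qed.

Lemma infinite_sum_minus u v a b :
  infinite_sum u a -> infinite_sum v b -> infinite_sum (fun n => u n - v n) (a - b).
Proof.
  intros Hu Hv. apply (Un_cv_ext (fun n => sum_f_R0 u n - sum_f_R0 v n)).
  - intros n. symmetry. apply minus_sum.
  - exact (CV_minus _ _ a b Hu Hv).
Qed.

Lemma infinite_sum_dominated u v l :
  (forall n, 0 <= u n <= v n) -> infinite_sum v l ->
  exists l', infinite_sum u l' /\ l' <= l.
Proof.
  intros Huv Hv. destruct (Rseries_CV_comp u v Huv (exist _ l Hv)) as [l' Hu].
  exists l'. split; [exact Hu |].
  apply (Rle_cv_lim (fun n => sum_growing u v n (fun k => proj2 (Huv k))) Hu Hv).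
Qed.

Lemma infinite_sum_single u k :
  (forall n, n <> k -> u n = 0) -> infinite_sum u (u k).
Proof.
  intros Hu.
  assert (Hpart : forall n, sum_f_R0 u n = if Nat.leb k n then u k else 0).
  { induction n as [| n IH].
    - simpl. destruct k; simpl; [reflexivity | apply Hu; lia].
    - simpl. rewrite IH.
      destruct (Nat.leb_spec k n), (Nat.leb_spec k (S n)); try lia.
      + rewrite (Hu (S n)) by lia. ring.
      + replace (S n) with k by lia. ring.
      + rewrite (Hu (S n)) by lia. ring. }
  intros eps Heps. exists k. intros n Hn. rewrite Hpart.
  destruct (Nat.leb_spec k n); [| lia]. unfold Rdist. rewrite Rminus_diag, Rabs_R0. exact Heps.
Qed.

Lemma dist_le_triang a b c : Rabs (a - b) <= Rabs (c - a) + Rabs (c - b).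
Proof.
  replace (a - b) with (- (c - a) + (c - b)) by ring.
  rewrite <- (Rabs_Ropp (c - a)). apply Rabs_triang.
Qed.

Lemma sup_eq E M : is_lub E M -> sup E = M.
Proof.
  intros HM. unfold sup.
  destruct (epsilon_spec (inhabits 0) (is_lub E) (ex_intro _ M HM)) as [Hub Hleast].
  destruct HM as [HubM HleastM]. apply Rle_antisym; auto.
Qed.

Lemma sup_ub E r C : (forall s, E s -> s <= C) -> E r -> r <= sup E.
Proof.
  intros HC Hr. destruct (completeness E (ex_intro _ C HC) (ex_intro _ r Hr)) as [M HM].
  rewrite (sup_eq E M HM). apply HM, Hr.
Qed.

Lemma sup_le E C : (exists r, E r) -> (forall s, E s -> s <= C) -> sup E <= C.
Proof.
  intros Hne HC. destruct (completeness E (ex_intro _ C HC) Hne) as [M HM].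
  rewrite (sup_eq E M HM). apply HM. exact HC.
Qed.

Definition en (k : nat) : Seq := fun n => if Nat.eqb n k then 1 else 0.

Section Lp.

Variable p : R.
Hypothesis Hp : 0 < p.

Lemma lp_norm_eq x S :
  infinite_sum (fun n => rpow (Rabs (x n)) p) S -> lp_norm p x = rpow S (1 / p).
Proof. intros HS. unfold lp_norm. rewrite (series_sum_eq _ _ HS). reflexivity. Qed.

Lemma inv_p_gt0 : 0 < 1 / p.
Proof. apply Rdiv_lt_0_compat; lra. Qed.

Lemma lp_norm_pow_sum x :
  in_lp p x -> infinite_sum (fun n => rpow (Rabs (x n)) p) (rpow (lp_norm p x) p).
Proof.
  intros [S HS]. rewrite (lp_norm_eq x S HS), rpow_inv_rpow; [exact HS | exact Hp |].
  apply (infinite_sum_ge0 (fun n => rpow (Rabs (x n)) p) S); [intros; apply rpow_ge0 | exact HS].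
Qed.

Lemma coord_le_lp_norm x k : in_lp p x -> Rabs (x k) <= lp_norm p x.
Proof.
  intros [S HS]. rewrite (lp_norm_eq x S HS), <- (rpow_rpow_inv (Rabs (x k)) p Hp (Rabs_pos _)).
  apply rpow_le; [apply rpow_ge0 | | left; apply inv_p_gt0].
  apply (term_le_infinite_sum (fun n => rpow (Rabs (x n)) p)); [intros; apply rpow_ge0 | exact HS].
Qed.

Lemma lp_dominated x y :
  in_lp p x -> (forall n, Rabs (y n) <= Rabs (x n)) ->
  in_lp p y /\ lp_norm p y <= lp_norm p x.
Proof.
  intros [S HS] Hyx.
  destruct (infinite_sum_dominated (fun n => rpow (Rabs (y n)) p) (fun n => rpow (Rabs (x n)) p) S) as [S' [HS' HS'S]];
    [intros n; split; [apply rpow_ge0 | apply rpow_le; auto using Rabs_pos; lra] | exact HS |].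
  split; [exists S'; exact HS' |].
  rewrite (lp_norm_eq x S HS), (lp_norm_eq y S' HS').
  apply rpow_le; [| exact HS'S | left; apply inv_p_gt0].
  apply (infinite_sum_ge0 _ S' (fun n => rpow_ge0 (Rabs (y n)) p) HS').
Qed.

Lemma lp_norm_eq_dominated x y :
  in_lp p x -> (forall n, Rabs (y n) <= Rabs (x n)) -> lp_norm p y = lp_norm p x ->
  forall n, Rabs (y n) = Rabs (x n).
Proof.
  intros Hx Hyx Hnorm n.
  pose proof (lp_norm_pow_sum x Hx) as Sx.
  pose proof (lp_norm_pow_sum y (proj1 (lp_dominated x y Hx Hyx))) as Sy.
  rewrite Hnorm in Sy.
  pose proof (infinite_sum_minus _ _ _ _ Sx Sy) as Sdiff. rewrite Rminus_diag in Sdiff.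
  assert (Hn : rpow (Rabs (x n)) p - rpow (Rabs (y n)) p = 0).
  { apply (infinite_sum_eq0_terms (fun n => rpow (Rabs (x n)) p - rpow (Rabs (y n)) p));
      [| exact Sdiff].
    intros k. pose proof (rpow_le _ _ p (Rabs_pos (y k)) (Hyx k)). lra. }
  rewrite <- (rpow_rpow_inv (Rabs (y n)) p), <- (rpow_rpow_inv (Rabs (x n)) p);
    auto using Rabs_pos.
  f_equal. lra.
Qed.

Lemma lp_norm_supported_at x k :
  (forall n, n <> k -> x n = 0) -> in_lp p x /\ lp_norm p x = Rabs (x k).
Proof.
  intros Hx.
  assert (HS : infinite_sum (fun n => rpow (Rabs (x n)) p) (rpow (Rabs (x k)) p)).
  { apply (infinite_sum_single (fun n => rpow (Rabs (x n)) p)).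
    intros n Hn. rewrite (Hx n Hn), Rabs_R0. apply rpow_0_l. }
  split; [exists (rpow (Rabs (x k)) p); exact HS |].
  rewrite (lp_norm_eq x _ HS). apply rpow_rpow_inv; auto using Rabs_pos.
Qed.

Lemma en_unit k : in_lp p (en k) /\ lp_norm p (en k) = 1.
Proof.
  destruct (lp_norm_supported_at (en k) k) as [Hlp Hnorm].
  - intros n Hn. unfold en. destruct (Nat.eqb_spec n k); [contradiction | reflexivity].
  - split; [exact Hlp |]. rewrite Hnorm. unfold en. rewrite Nat.eqb_refl. apply Rabs_R1.
Qed.

Lemma op_norm_ge A x :
  is_bounded_op p A -> in_lp p x -> lp_norm p x = 1 -> lp_norm p (A x) <= op_norm p A.
Proof.
  intros [_ [_ [C HC]]] Hx Hnorm. apply (sup_ub _ _ C).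
  - intros s [y [Hy [Hny ->]]]. specialize (HC y Hy). rewrite Hny in HC. lra.
  - exists x. auto.
Qed.

Lemma op_norm_le A C :
  (forall x, in_lp p x -> lp_norm p x = 1 -> lp_norm p (A x) <= C) -> op_norm p A <= C.
Proof.
  intros HC. apply sup_le.
  - exists (lp_norm p (A (en 0))). exists (en 0). destruct (en_unit 0). auto.
  - intros s [x [Hx [Hnorm ->]]]. apply HC; assumption.
Qed.

Lemma matrix_entry_le_op_norm A k m : is_bounded_op p A -> Rabs (A (en k) m) <= op_norm p A.
Proof.
  intros HA. destruct (en_unit k) as [Hk Hnorm].
  apply Rle_trans with (lp_norm p (A (en k))).
  - apply coord_le_lp_norm, (proj1 HA), Hk.
  - apply op_norm_ge; assumption.
Qed.

Lemma coord_contraction_bounded A :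
  (forall x y a b n, A (fun k => a * x k + b * y k) n = a * A x n + b * A y n) ->
  (forall x n, Rabs (A x n) <= Rabs (x n)) ->
  is_bounded_op p A /\ op_norm p A <= 1.
Proof.
  intros Hlin Hcontr.
  split; [split; [| split] |].
  - intros x Hx. exact (proj1 (lp_dominated x (A x) Hx (Hcontr x))).
  - intros x y a b _ _. apply Hlin.
  - exists 1. intros x Hx. rewrite Rmult_1_l. exact (proj2 (lp_dominated x (A x) Hx (Hcontr x))).
  - apply op_norm_le. intros x Hx <-. exact (proj2 (lp_dominated x (A x) Hx (Hcontr x))).
Qed.

Lemma norming_functional_intro A f :
  is_bounded_op p A -> op_norm p A = 1 ->
  (forall B C a b, is_bounded_op p B -> is_bounded_op p C ->
     f (op_lin a B b C) = a * f B + b * f C) ->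
  (forall B, is_bounded_op p B -> Rabs (f B) <= op_norm p B) ->
  f A = 1 ->
  norming_functional p A f.
Proof.
  intros HA HnA Hlin Hle HfA.
  split; [split; [exact Hlin | exists 1; intros B HB; rewrite Rmult_1_l; auto] | split].
  - apply sup_eq. split.
    + intros r [B [HB [HnB ->]]]. eapply Rle_trans; [apply Hle, HB | exact HnB].
    + intros b Hb. apply Hb. exists A. rewrite HnA, HfA, Rabs_R1. auto with real.
  - rewrite HfA, HnA. reflexivity.
Qed.

Lemma not_smooth_of_norming_functionals A f g B :
  norming_functional p A f -> norming_functional p A g -> is_bounded_op p B ->
  f B <> g B -> ~ smooth_point p A.
Proof.
  intros Hf Hg HB Hfg [h [_ Hh]]. apply Hfg. rewrite (Hh f Hf B HB), (Hh g Hg B HB). reflexivity.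
Qed.

End Lp.

Record is_ultrafilter (U : (nat -> Prop) -> Prop) : Prop := {
  uf_tail : forall N, U (fun n => (N <= n)%nat);
  uf_and : forall P Q, U P -> U Q -> U (fun n => P n /\ Q n);
  uf_mono : forall P Q : nat -> Prop, (forall n, P n -> Q n) -> U P -> U Q;
  uf_proper : ~ U (fun _ => False);
  uf_compl : forall P, U P \/ U (fun n => ~ P n) }.

Lemma ultrafilter_exists : exists U, is_ultrafilter U.
Proof.
  destruct (filter.ultraFilterLemma filter.eventually_filter) as [G [GU HG]].
  exists G. split.
  - intros N. apply HG. exists N; [exact I |]. intros n Hn. exact (ssrbool.elimT ssrnat.leP Hn).
  - intros P Q HP HQ. exact (@filter.filterI _ G _ P Q HP HQ).
  - intros P Q HPQ. apply filter.filterS. exact HPQ.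
  - exact (@filter.filter_not_empty _ G _).
  - intros P. exact (filter.in_ultra_setVsetC P GU).
Qed.

Section UltraLimit.

Variable U : (nat -> Prop) -> Prop.
Hypothesis HU : is_ultrafilter U.

Definition ulim_to (u : nat -> R) (l : R) : Prop :=
  forall eps, 0 < eps -> U (fun n => Rabs (u n - l) < eps).

Definition ulim (u : nat -> R) : R := epsilon (inhabits 0) (ulim_to u).

Lemma ulim_to_unique u l1 l2 : ulim_to u l1 -> ulim_to u l2 -> l1 = l2.
Proof.
  intros H1 H2. destruct (Req_dec l1 l2) as [E | E]; [exact E | exfalso].
  set (e := Rabs (l1 - l2) / 2).
  assert (He : 0 < e) by (apply Rdiv_lt_0_compat; [apply Rabs_pos_lt | ]; lra).
  apply (uf_proper U HU).
  refine (uf_mono U HU _ _ _ (uf_and U HU _ _ (H1 e He) (H2 e He))).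
  intros n [A B]. pose proof (dist_le_triang l1 l2 (u n)). unfold e in *. lra.
Qed.

Lemma ulim_to_exists u C : (forall n, Rabs (u n) <= C) -> exists l, ulim_to u l.
Proof.
  intros Hb.
  assert (Hbounds : forall n, - C <= u n <= C).
  { intros n. pose proof (Hb n). pose proof (Rle_abs (u n)). pose proof (Rle_abs (- u n)).
    rewrite Rabs_Ropp in *. lra. }
  (* The U-limit is the supremum of the l with l <= u n for U-almost every n. *)
  set (E := fun l => U (fun n => l <= u n)).
  assert (HE_low : E (- C)).
  { exact (uf_mono U HU _ _ (fun n _ => proj1 (Hbounds n)) (uf_tail U HU 0)). }
  assert (HE_up : forall l, E l -> l <= C).
  { intros l Hl. apply Rnot_lt_le. intros HCl. apply (uf_proper U HU).
    refine (uf_mono U HU _ _ _ Hl). intros n Hn. pose proof (Hbounds n). lra. }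
  destruct (completeness E (ex_intro _ C HE_up) (ex_intro _ _ HE_low)) as [L [HLub HLleast]].
  exists L. intros eps Heps.
  assert (Hbelow : U (fun n => L - eps < u n)).
  { apply NNPP. intros HnU. assert (Hub : is_upper_bound E (L - eps)).
    { intros l Hl. apply Rnot_lt_le. intros Hlt. apply HnU.
      refine (uf_mono U HU _ _ _ Hl). intros n Hn. lra. }
    pose proof (HLleast _ Hub). lra. }
  assert (Habove : U (fun n => u n < L + eps)).
  { destruct (uf_compl U HU (fun n => u n < L + eps)) as [H | H]; [exact H | exfalso].
    assert (HE : E (L + eps)) by (refine (uf_mono U HU _ _ _ H); intros n Hn; lra).
    pose proof (HLub _ HE). lra. }
  refine (uf_mono U HU _ _ _ (uf_and U HU _ _ Hbelow Habove)).
  intros n [B1 B2]. apply Rabs_def1; lra.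
Qed.

Lemma ulim_eq u l : ulim_to u l -> ulim u = l.
Proof.
  intros Hl. apply (ulim_to_unique u); [| exact Hl].
  exact (epsilon_spec (inhabits 0) (ulim_to u) (ex_intro _ l Hl)).
Qed.

Lemma ulimP u C : (forall n, Rabs (u n) <= C) -> ulim_to u (ulim u).
Proof.
  intros Hb. destruct (ulim_to_exists u C Hb) as [l Hl]. rewrite (ulim_eq u l Hl). exact Hl.
Qed.

Lemma ulim_of_cv u l : Un_cv u l -> ulim u = l.
Proof.
  intros Hu. apply ulim_eq. intros eps Heps. destruct (Hu eps Heps) as [N HN].
  exact (uf_mono U HU _ _ HN (uf_tail U HU N)).
Qed.

Lemma ulim_abs_le u C : (forall n, Rabs (u n) <= C) -> Rabs (ulim u) <= C.
Proof.
  intros Hb. apply Rnot_lt_le. intros HC. apply (uf_proper U HU).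
  refine (uf_mono U HU _ _ _ (ulimP u C Hb (Rabs (ulim u) - C) ltac:(lra))).
  intros n Hn. pose proof (Hb n). pose proof (dist_le_triang (ulim u) 0 (u n)).
  rewrite !Rminus_0_r in *. lra.
Qed.

Lemma ulim_lin u v a b Cu Cv :
  (forall n, Rabs (u n) <= Cu) -> (forall n, Rabs (v n) <= Cv) ->
  ulim (fun n => a * u n + b * v n) = a * ulim u + b * ulim v.
Proof.
  intros Hu Hv. apply ulim_eq. intros eps Heps.
  set (K := Rabs a + Rabs b + 1).
  assert (HK : 0 < K) by (unfold K; pose proof (Rabs_pos a); pose proof (Rabs_pos b); lra).
  set (d := eps / K).
  assert (Hd : 0 < d) by (apply Rdiv_lt_0_compat; lra).
  assert (HdK : d * K = eps) by (unfold d; field; lra).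
  refine (uf_mono U HU _ _ _ (uf_and U HU _ _ (ulimP u Cu Hu d Hd) (ulimP v Cv Hv d Hd))).
  intros n [Bu Bv].
  replace (a * u n + b * v n - (a * ulim u + b * ulim v))
    with (a * (u n - ulim u) + b * (v n - ulim v)) by ring.
  eapply Rle_lt_trans; [apply Rabs_triang |]. rewrite !Rabs_mult.
  pose proof (Rmult_le_compat_l _ _ _ (Rabs_pos a) (Rlt_le _ _ Bu)).
  pose proof (Rmult_le_compat_l _ _ _ (Rabs_pos b) (Rlt_le _ _ Bv)).
  unfold K in HdK. nra.
Qed.

End UltraLimit.

Definition diag_entry (k : nat) (A : Op) : R := A (en k) k.

Definition diag_ulim (U : (nat -> Prop) -> Prop) (A : Op) : R :=
  ulim U (fun n => diag_entry n A).

Lemma diag_entry_norming p A k :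
  0 < p -> is_bounded_op p A -> op_norm p A = 1 -> diag_entry k A = 1 ->
  norming_functional p A (diag_entry k).
Proof.
  intros Hp HA HnA HAk. apply norming_functional_intro; [exact HA | exact HnA | | | exact HAk].
  - intros B C a b _ _. reflexivity.
  - intros B HB. apply matrix_entry_le_op_norm; assumption.
Qed.

Lemma diag_ulim_norming p U A :
  0 < p -> is_ultrafilter U -> is_bounded_op p A -> op_norm p A = 1 ->
  Un_cv (fun n => diag_entry n A) 1 ->
  norming_functional p A (diag_ulim U).
Proof.
  intros Hp HU HA HnA Hcv. apply norming_functional_intro; [exact HA | exact HnA | | |].
  - intros B C a b HB HC. apply (ulim_lin U HU _ _ a b (op_norm p B) (op_norm p C));
      intros n; apply matrix_entry_le_op_norm; assumption.
  - intros B HB. apply (ulim_abs_le U HU). intros n. apply matrix_entry_le_op_norm; assumption.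
  - apply ulim_of_cv; assumption.
Qed.

Lemma T_op_coef n : 0 <= 1 - 1 / INR (S n) < 1.
Proof.
  pose proof (pos_INR n). rewrite S_INR.
  assert (0 < 1 / (INR n + 1) <= 1).
  { split; [apply Rdiv_lt_0_compat; lra |].
    apply Rmult_le_reg_r with (INR n + 1); [lra |]. field_simplify; lra. }
  lra.
Qed.

Lemma T_op_contraction x n : Rabs (T_op x n) <= Rabs (x n).
Proof.
  unfold T_op. destruct (Nat.eqb n 0); [lra |].
  pose proof (T_op_coef n). rewrite Rabs_mult, (Rabs_pos_eq (1 - _)) by lra.
  pose proof (Rabs_pos (x n)). nra.
Qed.

Lemma T_op_fixes_supported_at_0 x : (forall n, n <> 0%nat -> x n = 0) -> T_op x = x.
Proof.
  intros Hx. apply functional_extensionality. intros [| n]; unfold T_op; simpl; [reflexivity |].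
  rewrite (Hx (S n)) by lia. ring.
Qed.

Lemma T_op_bounded p : 0 < p -> is_bounded_op p T_op /\ op_norm p T_op = 1.
Proof.
  intros Hp.
  destruct (coord_contraction_bounded p Hp T_op) as [HT HnT];
    [intros x y a b n; unfold T_op; destruct (Nat.eqb n 0); ring | apply T_op_contraction |].
  split; [exact HT |]. apply Rle_antisym; [exact HnT |].
  destruct (en_unit p Hp 0) as [H0 Hn0]. rewrite <- Hn0 at 1.
  rewrite <- (T_op_fixes_supported_at_0 (en 0)) at 1.
  - apply op_norm_ge; assumption.
  - intros n Hn. unfold en. destruct (Nat.eqb_spec n 0); [contradiction | reflexivity].
Qed.

Lemma T_op_supported_at_0 p x :
  0 < p -> in_lp p x -> lp_norm p (T_op x) = lp_norm p x -> forall n, n <> 0%nat -> x n = 0.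
Proof.
  intros Hp Hx Hnorm n Hn.
  pose proof (lp_norm_eq_dominated p Hp x (T_op x) Hx (T_op_contraction x) Hnorm n) as Habs.
  unfold T_op in Habs. rewrite (proj2 (Nat.eqb_neq n 0) Hn), Rabs_mult in Habs.
  pose proof (T_op_coef n). rewrite Rabs_pos_eq in Habs by lra.
  destruct (Req_dec (x n) 0) as [E | E]; [exact E | exfalso].
  pose proof (Rabs_pos_lt _ E). nra.
Qed.

Lemma M_set_T_op p x : 0 < p -> (M_set p T_op x <-> (x = e1 \/ x = (fun n => - e1 n))).
Proof.
  intros Hp. destruct (T_op_bounded p Hp) as [HT HnT]. split.
  - intros [Hx [Hnorm HTx]]. rewrite HnT, <- Hnorm in HTx.
    pose proof (T_op_supported_at_0 p x Hp Hx HTx) as Hsupp.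
    pose proof (proj2 (lp_norm_supported_at p Hp x 0 Hsupp)) as Hx0.
    rewrite Hnorm in Hx0.
    assert (Hsign : x 0%nat = 1 \/ x 0%nat = -1).
    { destruct (Rcase_abs (x 0%nat));
        [rewrite Rabs_left in Hx0 | rewrite Rabs_right in Hx0]; lra. }
    destruct Hsign as [Hs | Hs]; [left | right]; apply functional_extensionality;
      intros [| n]; unfold e1; simpl; rewrite ?Hs, ?(Hsupp (S n)) by lia; ring.
  - intros Hx.
    assert (Hsupp : forall n, n <> 0%nat -> x n = 0).
    { intros n Hn. destruct Hx as [-> | ->]; unfold e1; rewrite (proj2 (Nat.eqb_neq n 0) Hn);
        [reflexivity | apply Ropp_0]. }
    assert (Hx0 : Rabs (x 0%nat) = 1).
    { destruct Hx as [-> | ->]; unfold e1; simpl; [apply Rabs_R1 | rewrite Rabs_Ropp; apply Rabs_R1]. }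
    destruct (lp_norm_supported_at p Hp x 0 Hsupp) as [Hlp Hnorm]. rewrite Hx0 in Hnorm.
    split; [exact Hlp | split; [exact Hnorm |]].
    rewrite T_op_fixes_supported_at_0, Hnorm, HnT by exact Hsupp. reflexivity.
Qed.

Lemma T_op_diag_cv : Un_cv (fun n => diag_entry n T_op) 1.
Proof.
  assert (Hinf : cv_infty (fun n => INR (S n))).
  { intros M. destruct (INR_unbounded M) as [N HN]. exists N. intros n Hn.
    apply Rlt_le_trans with (INR N); [lra | apply le_INR; lia]. }
  intros eps Heps. destruct (cv_infty_cv_0 _ Hinf eps Heps) as [N HN].
  exists (S N). intros n Hn. destruct n as [| n]; [lia |].
  specialize (HN (S n) ltac:(lia)). unfold diag_entry, T_op, en, Rdist in *.
  rewrite Nat.eqb_refl. change (Nat.eqb (S n) 0) with false. cbv beta iota.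
  replace ((1 - 1 / INR (S (S n))) * 1 - 1) with (- (/ INR (S (S n)))) by (unfold Rdiv; ring).
  rewrite Rabs_Ropp. rewrite Rminus_0_r in HN. exact HN.
Qed.

Definition proj_e1 : Op := fun x n => if Nat.eqb n 0 then x 0%nat else 0.

Lemma proj_e1_diag_cv : Un_cv (fun n => diag_entry n proj_e1) 0.
Proof.
  intros eps Heps. exists 1%nat. intros n Hn. destruct n as [| n]; [lia |].
  unfold diag_entry, proj_e1, Rdist. simpl. rewrite Rminus_0_r, Rabs_R0. exact Heps.
Qed.

Lemma proj_e1_bounded p : 0 < p -> is_bounded_op p proj_e1.
Proof.
  intros Hp. apply (coord_contraction_bounded p Hp).
  - intros x y a b n. unfold proj_e1. destruct (Nat.eqb n 0); ring.
  - intros x [| n]; unfold proj_e1; simpl; [lra | rewrite Rabs_R0; apply Rabs_pos].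
Qed.

Theorem mainTheorem8 (p : R) (hp : 1 < p) :
  is_bounded_op p T_op /\
  op_norm p T_op = 1 /\
  (forall x : Seq, M_set p T_op x <-> (x = e1 \/ x = (fun n => - e1 n))) /\
  ~ smooth_point p T_op.
Proof.
  assert (Hp : 0 < p) by lra.
  destruct (T_op_bounded p Hp) as [HT HnT].
  split; [exact HT | split; [exact HnT | split; [intros x; apply M_set_T_op, Hp |]]].
  destruct ultrafilter_exists as [U HU].
  apply (not_smooth_of_norming_functionals p T_op (diag_entry 0) (diag_ulim U) proj_e1).
  - apply diag_entry_norming; [exact Hp | exact HT | exact HnT |].
    unfold diag_entry, T_op, en. simpl. reflexivity.
  - apply diag_ulim_norming; [exact Hp | exact HU | exact HT | exact HnT | exact T_op_diag_cv].
  - apply proj_e1_bounded, Hp.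
  - unfold diag_ulim. rewrite (ulim_of_cv U HU _ 0 proj_e1_diag_cv).
    unfold diag_entry, proj_e1, en. simpl. exact R1_neq_R0.
Qed.
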